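(* Suppose that $R$ is a regular local ring dominated by $S$ and $(u,v)$ are regular parameters of $R$ such that $u=x^t$ and $v=y$, where $t$ is a positive integer. If $t\mid d_k$ for some $k>0$, then $\{u,\{T_i\}_{i=1}^{k+1}\}=\{T'_i\}_{i=0}^{k+1}$ is the beginning of a sequence of jumping polynomials in $R$ (with respect to $(u,v)$). Moreover, for all $1\le i\le k$ the pair of coprime integers defined in the construction of the jumping polynomials $\{T'_i\}_{i\ge0}$ in $R$ is $(p'_i,q'_i)=\left(\frac{p_i}{t},q_i\right)$.
   Context: Setting: $k$ (the base field) is algebraically closed of characteristic $0$; $K^*/K$ is a finite extension of function fields of transcendence degree $2$ over $k$; $\nu^*$ is a $k$-valuation of $K^*$ with valuation ring $V^*$, value group a subgroup of $\mathbb{Q}$ and residue field $V^*/m_{V^*}=k$; $\nu$ is its restriction to $K$. $S$ is an algebraic two-dimensional regular local ring with quotient field $K^*$ dominated by $V^*$, with regular parameters $(x,y)$; $\nu^*$ is normalized so that $\nu^*(x)=1$; $R$ is an algebraic regular local ring with quotient field $K$. Jumping polynomials of a ring $A$ with regular parameters $(a_0,a_1)$, with respect to the valuation $\mu=\nu^*/\nu^*(a_0)$ (so $\mu(a_0)=1$): $T_0=a_0$, $T_1=a_1$, $q_0=\infty$, $p_1,q_1$ coprime positive integers with $\mu(a_1)=p_1/q_1$; for $i\ge1$, $n_{i,j}$ ($0\le j<i$) are nonnegative integers with $n_{i,j}<q_j$ and $q_i\mu(T_i)=\sum_{j<i}n_{i,j}\mu(T_j)$, $\lambda_i\in k$ is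 the residue of $T_i^{q_i}/\prod_{j<i}T_j^{n_{i,j}}$, $T_{i+1}=T_i^{q_i}-\lambda_i\prod_{j<i}T_j^{n_{i,j}}$, and $p_{i+1},q_{i+1}$ are coprime positive integers with $\mu(T_{i+1})=q_i\mu(T_i)+\frac{1}{q_1\cdots q_i}\frac{p_{i+1}}{q_{i+1}}$. Here $\{T_i\}$, $p_i$, $q_i$ denote the jumping polynomials and integers of $S$ with respect to $(x,y)$, $\{T'_i\}$, $p'_i,q'_i$ those of $R$ with respect to $(u,v)$, and $d_k=\gcd(p_1,\dots,p_k)$. *)

From HB Require Import structures.
From mathcomp Require Import all_boot all_order all_algebra.
Set Implicit Arguments. Unset Strict Implicit. Unset Printing Implicit Defensive.
Import Order.TTheory GRing.Theory Num.Theory.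
Local Open Scope ring_scope.

(* A k-valuation on the field L (containing k via iota) with values in Q and
   residue field k.  The value [nu 0] (= +oo in the paper) is irrelevant:
   all axioms only concern nonzero elements. *)
Definition kvaluation (k : fieldType) (L : fieldType) (iota : {rmorphism k -> L})
    (nu : L -> rat) : Prop :=
  [/\ (forall a b : L, a != 0 -> b != 0 -> nu (a * b) = nu a + nu b),
      (forall a b : L, a != 0 -> b != 0 -> a + b != 0 ->
          Num.min (nu a) (nu b) <= nu (a + b)),
      (forall c : k, c != 0 -> nu (iota c) = 0) &
      (* residue field V/m_V = k *)
      (forall f : L, f != 0 -> nu f = 0 ->
          exists c : k, f - iota c = 0 \/ 0 < nu (f - iota c))].

Definition is_residue (k L : fieldType) (iota : {rmorphism k -> L})
    (nu : L -> rat) (f : L) (c : k) : Prop :=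
  f - iota c = 0 \/ 0 < nu (f - iota c).

(* A (sub)ring A of L containing k, a local ring dominated by the valuation
   ring V of nu (so m_A = m_V \cap A), whose maximal ideal is generated by
   the two elements a0, a1 of m_A ("regular parameters"). *)
Definition local_dominated_params (k L : fieldType) (iota : {rmorphism k -> L})
    (nu : L -> rat) (A : {pred L}) (a0 a1 : L) : Prop :=
  [/\ [/\ 1 \in A, (forall a b, a \in A -> b \in A -> a + b \in A),
          (forall a b, a \in A -> b \in A -> a * b \in A),
          (forall a, a \in A -> - a \in A) &
          (forall c : k, iota c \in A)],
      (forall a, a \in A -> a != 0 -> 0 <= nu a),
      (forall a, a \in A -> a != 0 -> nu a = 0 -> a^-1 \in A),
      [/\ a0 \in A, a1 \in A, a0 != 0 & a1 != 0] /\ (0 < nu a0 /\ 0 < nu a1) &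
      (forall a, a \in A -> (a = 0 \/ 0 < nu a) ->
          exists r s, [/\ r \in A, s \in A & a = r * a0 + s * a1])].

Definition nmu (L : fieldType) (nu : L -> rat) (a0 : L) (f : L) : rat :=
  nu f / nu a0.

(* [jumping_upto iota nu a0 a1 T p q n lam m] : T_0, ..., T_m are the first
   jumping polynomials of a ring with regular parameters (a0,a1) w.r.t.
   mu = nu/nu(a0), with the integers p_i, q_i (1 <= i < m), n_{i,j}
   (1 <= i < m, j < i) and residues lam_i (1 <= i < m) of the construction.
   (T_m is defined as T_{m-1}^{q_{m-1}} - lam_{m-1} prod ..., while the pair
   (p_m, q_m) is not part of the data.) *)
Definition jumping_upto (k L : fieldType) (iota : {rmorphism k -> L})
    (nu : L -> rat) (a0 a1 : L) (T : nat -> L) (p q : nat -> nat)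
    (n : nat -> nat -> nat) (lam : nat -> k) (m : nat) : Prop :=
  let mu := nmu nu a0 in
  [/\ T 0%N = a0, T 1%N = a1 &
      (forall i, (i < m)%N -> T i != 0)] /\
  [/\
      (forall i, (1 <= i < m)%N -> [/\ (0 < p i)%N, (0 < q i)%N & coprime (p i) (q i)]),
      ((1 < m)%N -> mu (T 1%N) = (p 1%N)%:R / (q 1%N)%:R),
      (forall i, (1 <= i < m)%N ->
         [/\ (forall j, (1 <= j < i)%N -> (n i j < q j)%N),
             (q i)%:R * mu (T i) = \sum_(j < i) (n i j)%:R * mu (T j),
             is_residue iota nu (T i ^+ q i / \prod_(j < i) T j ^+ n i j) (lam i) &
             T i.+1 = T i ^+ q i - iota (lam i) * \prod_(j < i) T j ^+ n i j]) &
      (forall i, (1 <= i)%N -> (i.+1 < m)%N ->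
         mu (T i.+1) = (q i)%:R * mu (T i)
            + (\prod_(1 <= j < i.+1) (q j)%:R)^-1 * ((p i.+1)%:R / (q i.+1)%:R))].

Definition dgcd (p : nat -> nat) (kk : nat) : nat :=
  \big[gcdn/0%N]_(1 <= i < kk.+1) p i.

From HB Require Import structures.
From mathcomp Require Import all_boot all_order all_algebra.
From mathcomp Require Import ring lra.
Set Implicit Arguments. Unset Strict Implicit. Unset Printing Implicit Defensive.
Import Order.TTheory GRing.Theory Num.Theory.
Local Open Scope ring_scope.

(* Write mu for the valuation normalized by nu(x); since nu(x^t) = t nu(x), the
   valuation normalized by nu(u) is mu/t, and the jumping data of S transfer to R
   once p_i and the exponents n_{i,0} of T_0 = x are divided by t.  For p_i this
   is the hypothesis t | d_k.  For n_{i,0}: with Q_j = q_1 ... q_j, the recursion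
   for mu(T_{j+1}) shows by induction that Q_j mu(T_j) / t is an integer;
   multiplying q_i mu(T_i) = sum_j n_{i,j} mu(T_j) by Q_{i-1} / t then gives
   t | n_{i,0} Q_{i-1}, and Q_{i-1} is prime to t because t | p_l and
   gcd(p_l, q_l) = 1. *)

Lemma natr_div_int (R : archiNumFieldType) (a t : nat) : (0 < t)%N ->
  ((a%:R / t%:R : R) \is a Num.int) = (t %| a)%N.
Proof.
move=> t_gt0; have tR : (t%:R : R) != 0 by rewrite pnatr_eq0 -lt0n.
apply/idP/idP => [|t_a]; last by rewrite -natr_div ?natr_int // unitfE.
rewrite intrEge0 ?divr_ge0 ?ler0n // => /natrP[c /(congr1 (fun z => z * t%:R))].
by rewrite divfK // -natrM => /eqP; rewrite eqr_nat => /eqP ->; apply: dvdn_mull.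
Qed.

Definition qprod (q : nat -> nat) i := (\prod_(1 <= l < i.+1) q l)%N.

Lemma qprodS q i : qprod q i.+1 = (qprod q i * q i.+1)%N.
Proof. by rewrite /qprod big_nat_recr. Qed.

Lemma qprod_dvd q j i : (j <= i)%N -> (qprod q j %| qprod q i)%N.
Proof.
by move=> ji; rewrite [X in (_ %| X)%N](big_cat_nat (n := j.+1)) ?dvdn_mulr.
Qed.

Section ScaledValues.

Variables (R : archiNumFieldType) (mu : nat -> R) (p q : nat -> nat) (t m : nat).
Hypothesis t_gt0 : (0 < t)%N.
Hypothesis pq_coprime : forall i, (1 <= i < m)%N ->
  [/\ (0 < p i)%N, (0 < q i)%N & coprime (p i) (q i)].
Hypothesis t_dvd_p : forall i, (1 <= i < m)%N -> (t %| p i)%N.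
Hypothesis mu1 : (1 < m)%N -> mu 1%N = (p 1%N)%:R / (q 1%N)%:R.
Hypothesis muS : forall i, (1 <= i)%N -> (i.+1 < m)%N ->
  mu i.+1 = (q i)%:R * mu i + ((qprod q i)%:R)^-1 * ((p i.+1)%:R / (q i.+1)%:R).

Let tR : (t%:R : R) != 0. Proof. by rewrite pnatr_eq0 -lt0n. Qed.

Lemma qprod_gt0 i : (i < m)%N -> (0 < qprod q i)%N.
Proof.
move=> im; rewrite /qprod big_nat prodn_cond_gt0 // => l /andP[l_ge1 l_le].
have lm : (1 <= l < m)%N by rewrite l_ge1 (leq_trans l_le).
by have [] := pq_coprime lm.
Qed.

Lemma coprime_qprod i : (i < m)%N -> coprime t (qprod q i).
Proof.
move=> im; rewrite /qprod big_nat; elim/big_ind: _ => [|a b|l /andP[l_ge1 l_le]].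
- exact: coprimen1.
- by rewrite coprimeMr => -> ->.
have lm : (1 <= l < m)%N by rewrite l_ge1 (leq_trans l_le).
by have [_ _ /(coprime_dvdl (t_dvd_p lm))] := pq_coprime lm.
Qed.

Lemma mu_qprod_int j : (1 <= j < m)%N ->
  mu j * (qprod q j)%:R / t%:R \is a Num.int.
Proof.
elim: j => [//|[|j] IH jm].
  have qR : ((q 1%N)%:R : R) != 0 by have [] := pq_coprime jm; rewrite pnatr_eq0 -lt0n.
  by rewrite /qprod big_nat1 mu1 // divfK // natr_div_int ?t_dvd_p.
have j2m : (j.+2 < m)%N by case/andP: jm.
have QR : ((qprod q j.+1)%:R : R) != 0 by rewrite pnatr_eq0 -lt0n qprod_gt0 // ltnW.
have qR : ((q j.+2)%:R : R) != 0 by have [] := pq_coprime jm; rewrite pnatr_eq0 -lt0n.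
have -> : mu j.+2 * (qprod q j.+2)%:R / t%:R =
    (q j.+1 * q j.+2)%:R * (mu j.+1 * (qprod q j.+1)%:R / t%:R) + (p j.+2)%:R / t%:R.
  by rewrite muS // (qprodS q j.+1) !natrM; field; rewrite QR qR tR.
apply: rpredD; last by rewrite natr_div_int ?t_dvd_p.
by apply: rpredM; [exact: natr_int | apply: IH; exact: ltnW j2m].
Qed.

Lemma mu_qprod_int_le j i : (1 <= j <= i)%N -> (i < m)%N ->
  mu j * (qprod q i)%:R / t%:R \is a Num.int.
Proof.
move=> /andP[j_ge1 ji] im; rewrite -(divnK (qprod_dvd q ji)) natrM mulrCA -mulrA.
by rewrite rpredM ?natr_int // mu_qprod_int // j_ge1 (leq_ltn_trans ji).
Qed.

Lemma dvdn_coef0 (c : nat -> nat) i : (1 <= i < m)%N -> mu 0%N = 1 ->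
  (q i)%:R * mu i = \sum_(j < i) (c j)%:R * mu j -> (t %| c 0%N)%N.
Proof.
case: i => [//|i] im mu0 mu_rel; have i_lt_m : (i < m)%N by rewrite ltnW.
rewrite -(Gauss_dvdl _ (coprime_qprod i_lt_m)) -(natr_div_int R) // natrM.
have -> : (c 0%N)%:R * (qprod q i)%:R / t%:R = mu i.+1 * (qprod q i.+1)%:R / t%:R
    - \sum_(j < i) (c j.+1)%:R * (mu j.+1 * (qprod q i)%:R / t%:R).
  rewrite (qprodS q i) natrM mulrA [mu i.+1 * _ * _]mulrAC [mu i.+1 * _]mulrC.
  rewrite mu_rel big_ord_recl mu0 mulr1 /= !mulrDl !mulr_suml.
  by rewrite (eq_bigr (fun j : 'I_i => (c j.+1)%:R * (mu j.+1 * (qprod q i)%:R / t%:R)))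
    ?addrK // => j _; rewrite !mulrA.
apply: rpredB; first by apply: mu_qprod_int.
by apply: rpred_sum => j _; rewrite rpredM ?natr_int ?mu_qprod_int_le ?ltn_ord.
Qed.
End ScaledValues.

Section Valuation.

Variables (L : fieldType) (nu : L -> rat).
Hypothesis nuM : forall a b : L, a != 0 -> b != 0 -> nu (a * b) = nu a + nu b.

Lemma nu1 : nu 1 = 0.
Proof. by have := nuM (oner_neq0 L) (oner_neq0 L); rewrite mulr1; lra. Qed.

Lemma nuX (a : L) n : a != 0 -> nu (a ^+ n) = n%:R * nu a.
Proof.
move=> a0; elim: n => [|n IH]; first by rewrite expr0 mul0r nu1.
by rewrite exprS nuM ?expf_neq0 // IH mulrSr mulrDl mul1r addrC.
Qed.

Lemma nmuX (a f : L) n : a != 0 -> nmu nu (a ^+ n) f = nmu nu a f / n%:R.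
Proof. by move=> a0; rewrite /nmu nuX // invfM mulrA mulrAC. Qed.

End Valuation.

Lemma jumping_upto_expr (k L : fieldType) (iota : {rmorphism k -> L}) (nu : L -> rat)
    (x y : L) (T : nat -> L) (p q : nat -> nat) (n : nat -> nat -> nat) (lam : nat -> k)
    (m t : nat) :
  (forall a b : L, a != 0 -> b != 0 -> nu (a * b) = nu a + nu b) ->
  x != 0 -> nu x != 0 -> (0 < t)%N -> (forall i, (1 <= i < m)%N -> (t %| p i)%N) ->
  jumping_upto iota nu x y T p q n lam m ->
  jumping_upto iota nu (x ^+ t) y (fun i => if i == 0%N then x ^+ t else T i)
    (fun i => (p i %/ t)%N) q (fun i j => if j == 0%N then (n i 0%N %/ t)%N else n i j)
    lam m.
Proof.
move=> nuM x0 nux0 t_gt0 t_dvd_p [[T0 T1 T_neq0] [pq_coprime muT1 T_rel muTS]].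
have tR : (t%:R : rat) != 0 by rewrite pnatr_eq0 -lt0n.
have mu_xt f : nmu nu (x ^+ t) f = nmu nu x f / t%:R by apply: nmuX.
have mu_xt_xt : nmu nu (x ^+ t) (x ^+ t) = 1 by rewrite /nmu divff // nuX // mulf_neq0.
have muT0 : nmu nu x (T 0%N) = 1 by rewrite T0 /nmu divff.
have t_dvd_n0 i : (1 <= i < m)%N -> (t %| n i 0%N)%N.
  move=> im; have [_ rel _ _] := T_rel i im.
  apply: (dvdn_coef0 (mu := fun j => nmu nu x (T j)) t_gt0 pq_coprime t_dvd_p _ _
    im muT0 rel); first exact: muT1.
  by move=> j j_ge1 jm; rewrite natr_prod; apply: muTS.
have p_div i : (1 <= i < m)%N -> ((p i %/ t)%N%:R : rat) = (p i)%:R / t%:R.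
  by move=> im; rewrite natr_div ?t_dvd_p // unitfE.
have prodE i : (1 <= i < m)%N ->
    \prod_(j < i) (if j == 0%N :> nat then x ^+ t else T j) ^+
      (if j == 0%N :> nat then (n i 0%N %/ t)%N else n i j) = \prod_(j < i) T j ^+ n i j.
  case: i => [//|i] im.
  by rewrite !big_ord_recl /= T0 -exprM mulnC divnK ?t_dvd_n0.
split; first by split=> // [[|i] im]; [rewrite expf_neq0 | apply: T_neq0].
split.
- move=> i im; have [p_gt0 q_gt0 pq] := pq_coprime i im.
  have t_p := t_dvd_p i im.
  split=> //; first by rewrite divn_gt0 // dvdn_leq.
  by apply: coprime_dvdl pq; rewrite dvdn_div.
- by move=> m_gt1; rewrite mu_xt muT1 // p_div ?m_gt1 // mulrAC.
- case=> [//|i] im; have [n_lt rel res Tstep] := T_rel i.+1 im.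
  rewrite /= prodE //; split=> // [j /andP[j_ge1 ji]|].
    by rewrite eqn0Ngt j_ge1 n_lt ?j_ge1.
  rewrite big_ord_recl /= mu_xt_xt mulr1 natr_div ?unitfE ?t_dvd_n0 //.
  rewrite big_ord_recl muT0 mulr1 /= in rel.
  rewrite mu_xt mulrA rel mulrDl mulr_suml; congr (_ + _).
  by apply: eq_bigr => j _; rewrite mu_xt mulrA.
- by move=> i i_ge1 im; rewrite !mu_xt eqn0Ngt i_ge1 /= muTS // p_div ?im //; ring.
Qed.

Lemma dvdn_dgcd p kk i : (1 <= i <= kk)%N -> (dgcd p kk %| p i)%N.
Proof. by move=> ik; rewrite /dgcd (big_rem i) ?mem_index_iota ?ltnS ?dvdn_gcdl. Qed.

Theorem theorem7p1
  (k : closedFieldType) (hchar : [pchar k] =i pred0)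
  (L : fieldType) (iota : {rmorphism k -> L}) (nu : L -> rat)
  (hnu : kvaluation iota nu)
  (S R : {pred L}) (x y u v : L)
  (hS : local_dominated_params iota nu S x y)
  (hSfrac : forall f : L, exists a b, [/\ a \in S, b \in S, b != 0 & f = a / b])
  (hR : local_dominated_params iota nu R u v)
  (hRS : {subset R <= S})
  (hx : nu x = 1)
  (t : nat) (ht : (0 < t)%N) (hu : u = x ^+ t) (hv : v = y)
  (T : nat -> L) (p q : nat -> nat) (n : nat -> nat -> nat) (lam : nat -> k)
  (kk : nat) (hkk : (0 < kk)%N)
  (hT : jumping_upto iota nu x y T p q n lam kk.+1)
  (hdiv : (t %| dgcd p kk)%N) :
  exists (n' : nat -> nat -> nat) (lam' : nat -> k),
    jumping_upto iota nu u v (fun i => if i == 0%N then u else T i)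
      (fun i => (p i %/ t)%N) q n' lam' kk.+1.
Proof.
have [nuM _ _ _] := hnu.
have [_ _ _ [[_ _ x_neq0 _] _] _] := hS.
have t_dvd_p i : (1 <= i < kk.+1)%N -> (t %| p i)%N.
  by move=> ik; apply: dvdn_trans hdiv (dvdn_dgcd _ _).
subst u v; exists (fun i j => if j == 0%N then (n i 0%N %/ t)%N else n i j), lam.
by apply: jumping_upto_expr hT => //; rewrite hx oner_neq0.
Qed.
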